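(* Let $X$ be a real normed space and $\mathcal M=\{M_1,\dots,M_n\}$ a finite family of nonempty compact convex subsets of $X$, with $\Sigma(\mathcal M)\neq\emptyset$ and $d=(d_1,\dots,d_n)\in\Omega(\mathcal M)$. Then for every $K\in\Sigma_d(\mathcal M)$ there exist $i$ and $x\in M_i$ with $U_{d_i}(x)\cap K=\emptyset$. In particular, some $M_i$ contains a point $x$ with $U_{d_i}(x)\cap K_d=\emptyset$ (a $d$-far point for $M_i$).
   Context: For $p\in X$ and $A\subset X$: $|p\,A|=\inf_{a\in A}|p\,a|$ ($=\infty$ if $A=\emptyset$); $B_r(A)=\{p:|p\,A|\le r\}$, $U_r(x)=\{p:|p\,x|<r\}$. For nonempty $A,B$, $d_H(A,B)=\max\{\sup_{a\in A}|a\,B|,\sup_{b\in B}|b\,A|\}$. Let $\mathcal P^f_{\mathrm{Cl}}(X)$ be the set of all nonempty closed $Y\subset X$ with $d_H(Y,M_1)<\infty$. $S_{\mathcal M}(Y)=\sum_i d_H(Y,M_i)$; $\Sigma(\mathcal M)$ is the set of minimizers of $S_{\mathcal M}$ over $\mathcal P^f_{\mathrm{Cl}}(X)$; for $K\in\Sigma(\mathcal M)$, $d(K)=(d_H(K,M_1),\dots,d_H(K,M_n))$; $\Omega(\mathcal M)=\{d(K):K\in\Sigma(\mathcal M)\}$; for $d\in\Omega(\mathcal M)$, $\Sigma_d(\mathcal M)=\{K\in\Sigma(\mathcal M):d(K)=d\}$ and $K_d=\bigcap_{i=1}^nB_{d_i}(M_i)$. *)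

From HB Require Import structures.
From mathcomp Require Import all_boot all_order all_algebra.
From mathcomp Require Import all_classical all_reals all_analysis.
Import Order.TTheory GRing.Theory Num.Theory.
Import numFieldNormedType.Exports.
Set Implicit Arguments. Unset Strict Implicit. Unset Printing Implicit Defensive.
Local Open Scope classical_set_scope.
Local Open Scope ring_scope.

Section Defs.
Variables (R : realType) (X : normedModType R).

Definition cvx (A : set X) : Prop :=
  forall x y (t : R), A x -> A y -> 0 <= t -> t <= 1 -> A (t *: x + (1 - t) *: y).

(* |p A| = inf_{a in A} |p - a|, = +oo when A is empty *)
Definition dpt (p : X) (A : set X) : \bar R :=
  ereal_inf [set (`|p - a|)%:E | a in A].

Definition Bset (r : R) (A : set X) : set X := [set p | (dpt p A <= r%:E)%E].

Definition Uball (r : R) (x : X) : set X := [set p | `|p - x| < r].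

Definition dH (A B : set X) : \bar R :=
  Order.max (ereal_sup [set dpt a B | a in A]) (ereal_sup [set dpt b A | b in B]).

Variable n : nat.
(* the family M_1, ..., M_{n+1}, indexed by 'I_n.+1; M_1 is M ord0 *)
Variable M : 'I_n.+1 -> set X.

Definition PfCl : set (set X) :=
  [set Y | Y !=set0 /\ closed Y /\ (dH Y (M ord0) < +oo)%E].

Definition SM (Y : set X) : \bar R := (\sum_(i < n.+1) dH Y (M i))%E.

Definition Sigma : set (set X) :=
  [set K | PfCl K /\ forall Y, PfCl Y -> (SM K <= SM Y)%E].

Definition dvec (K : set X) : 'I_n.+1 -> \bar R := fun i => dH K (M i).

Definition Omega : set ('I_n.+1 -> \bar R) := [set dvec K | K in Sigma].

Definition Sigma_d (d : 'I_n.+1 -> \bar R) : set (set X) :=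
  [set K | Sigma K /\ dvec K = d].

Definition Kd (d : 'I_n.+1 -> R) : set X :=
  \bigcap_(i in [set: 'I_n.+1]) Bset (d i) (M i).

End Defs.

From HB Require Import structures.
From mathcomp Require Import all_boot all_order all_algebra.
From mathcomp Require Import all_classical all_reals all_analysis.
From mathcomp Require Import ring lra.
Import Order.TTheory GRing.Theory Num.Theory.
Import numFieldNormedType.Exports.
Local Open Scope classical_set_scope.
Local Open Scope ring_scope.

(* Suppose K is a minimizer with distance vector d such that every point of
   every M_i lies strictly closer than d_i to K.  By compactness this becomes
   uniform: every point of M_i lies within d_i - delta of K.  Shrink K towards
   a point q of K that lies within d_1 - delta of M_1, by a small ratio t.
   Since the distance to a convex set is a convex function, points of the
   shrunk set stay within d_i of M_i, and within d_1 - t delta of M_1; points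
   of M_i lose at most t diam(K) <= delta of their approximation.  So the sum
   of Hausdorff distances drops, contradicting minimality.
   For K_d: it is closed, contains every K in Sigma_d and is at Hausdorff
   distance at most d_i from M_i, so by minimality it lies in Sigma_d itself. *)

Section PointSetDistance.
Context {R : realType} {X : normedModType R}.
Implicit Types (A B K : set X) (p q a k x : X) (r s : R).

Lemma dpt_le_norm [A a] p : A a -> (dpt p A <= (`|p - a|)%:E)%E.
Proof. by move=> Aa; apply: ereal_inf_lbound; exists a. Qed.

Lemma dpt_leP p A r :
  (dpt p A <= r%:E)%E <-> (forall e, 0 < e -> exists2 a, A a & `|p - a| < r + e).
Proof.
split=> [h e e0|h].
- have : (dpt p A < (r + e)%:E)%E by apply: le_lt_trans h _; rewrite lte_fin ltrDl.
  by move=> /ereal_inf_lt [_ [a Aa <-]]; rewrite lte_fin; exists a.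
- apply/lee_addgt0Pr => e e0; have [a Aa ha] := h e e0.
  by apply: (le_trans (dpt_le_norm p Aa)); rewrite -EFinD lee_fin ltW.
Qed.

Lemma dpt_le_normD p A r s :
  (dpt p A <= r%:E)%E -> (forall a, A a -> `|a| <= s) -> `|p| <= r + s.
Proof.
move=> /dpt_leP hp hA; apply/ler_addgt0Pr => e e0.
have [a Aa hpa] := hp e e0; have := hA a Aa.
have := ler_normD (p - a) a; rewrite subrK; lra.
Qed.

Lemma Bset_closed r A : closed (Bset r A).
Proof.
move=> p clp; apply/dpt_leP => e e0.
have e20 : 0 < e / 2 by rewrite divr_gt0.
have [p' [/dpt_leP hp' pp']] := clp _ (nbhsx_ballx p _ e20).
have [a Aa hp'a] := hp' _ e20; exists a => //.
move: pp'; rewrite -ball_normE /ball_ /= => pp'.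
have := ler_distD p' p a; lra.
Qed.

Lemma dpt_convex A k q (a b t : R) : cvx A -> 0 <= t -> t <= 1 ->
  (dpt k A <= a%:E)%E -> (dpt q A <= b%:E)%E ->
  (dpt ((1 - t) *: k + t *: q)%R A <= ((1 - t) * a + t * b)%:E)%E.
Proof.
move=> cA t0 t1 /dpt_leP hk /dpt_leP hq; apply/dpt_leP => e e0.
have e20 : 0 < e / 2 by rewrite divr_gt0.
have [m1 Am1 h1] := hk _ e20; have [m2 Am2 h2] := hq _ e20.
have t'0 : 0 <= 1 - t by rewrite subr_ge0.
exists ((1 - t) *: m1 + (1 - (1 - t)) *: m2); first by apply: cA => //; lra.
rewrite subKr.
have -> : (1 - t) *: k + t *: q - ((1 - t) *: m1 + t *: m2)
    = (1 - t) *: (k - m1) + t *: (q - m2).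
  by rewrite !scalerBr opprD addrACA.
apply: le_lt_trans (ler_normD _ _) _; rewrite !normrZ !ger0_norm //.
have : (1 - t) * `|k - m1| + t * `|q - m2| <= (1 - t) * (a + e / 2) + t * (b + e / 2).
  by apply: lerD; apply: ler_wpM2l => //; apply: ltW.
nra.
Qed.

Lemma dH_leP A B r :
  (dH A B <= r%:E)%E <-> ((forall a, A a -> (dpt a B <= r%:E)%E) /\
                          (forall b, B b -> (dpt b A <= r%:E)%E)).
Proof.
rewrite /dH ge_max; split.
- move=> /andP[h1 h2]; split => [a Aa|b Bb].
  + by apply: le_trans h1; apply: ereal_sup_ubound; exists a.
  + by apply: le_trans h2; apply: ereal_sup_ubound; exists b.
- move=> [h1 h2]; apply/andP; split; apply: ge_ereal_sup.
  + by move=> _ [a Aa <-]; apply: h1.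
  + by move=> _ [b Bb <-]; apply: h2.
Qed.

Lemma dpt_le_dHl [A] B [a] : A a -> (dpt a B <= dH A B)%E.
Proof. by move=> Aa; rewrite le_max ereal_sup_ubound //; exists a. Qed.

Lemma dpt_le_dHr A [B b] : B b -> (dpt b A <= dH A B)%E.
Proof. by move=> Bb; rewrite le_max orbC ereal_sup_ubound //; exists b. Qed.

Definition contract q (t : R) K : set X := [set (1 - t) *: k + t *: q | k in K].

Lemma contract_closed q (t : R) K : t != 1 -> closed K -> closed (contract q t K).
Proof.
move=> t1 clK; have ut : 1 - t != 0 by rewrite subr_eq0 eq_sym.
pose g p := (1 - t)^-1 *: (p - t *: q).
have -> : contract q t K = g @^-1` K.
  apply/seteqP; split => [_ [k Kk <-]|p Kgp] /=.
  - by rewrite /g addrK scalerA mulVf // scale1r.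
  - by exists (g p) => //; rewrite /g scalerA mulfV // scale1r subrK.
apply: closed_comp => // p _.
apply: (@continuousZ _ _ _ (cst (1 - t)^-1) (fun p => p - t *: q)).
  exact: cst_continuous.
by apply: (@continuousB _ _ _ id (cst (t *: q))) => //; apply: cst_continuous.
Qed.

Lemma dH_contract_le [A K q] [t a b s D : R] : cvx A -> 0 <= t -> t <= 1 ->
  (forall k, K k -> `|k - q| <= D) ->
  (forall k, K k -> (dpt k A <= a%:E)%E) -> (dpt q A <= b%:E)%E ->
  (forall x, A x -> exists2 k, K k & `|x - k| <= s) ->
  s + t * D <= (1 - t) * a + t * b ->
  (dH (contract q t K) A <= ((1 - t) * a + t * b)%:E)%E.
Proof.
move=> cA t0 t1 KD Ka qb As sD; apply/dH_leP; split.
  by move=> _ [k Kk <-]; apply: dpt_convex => //; apply: Ka.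
move=> x Ax; have [k Kk xk] := As x Ax.
have K'k : contract q t K ((1 - t) *: k + t *: q) by exists k.
apply: le_trans (dpt_le_norm x K'k) _; rewrite lee_fin.
have -> : x - ((1 - t) *: k + t *: q) = (x - k) + t *: (k - q).
  by rewrite scalerBl scale1r scalerBr opprD opprB addrA [t *: k - k]addrC !addrA.
apply: le_trans (ler_normD _ _) _; rewrite normrZ ger0_norm //.
have := ler_wpM2l t0 (KD k Kk); lra.
Qed.

End PointSetDistance.

Section UniformApproximation.
Context {R : realType} {X : normedModType R}.

Lemma compact_increasing_cover (A : set X) (f : nat -> set X) : compact A ->
  (forall m, open (f m)) -> {homo f : m m' / (m <= m')%N >-> m `<=` m'} ->
  A `<=` \bigcup_m f m -> \forall m \near \oo, A `<=` f m.
Proof.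
rewrite compact_cover => cA fo f_incr Af.
have [D _ AD] := cA nat setT f (fun m _ => fo m) Af.
exists (\max_(j <- finmap.enum_fset D) j)%N => // m le x /AD [j /= jD fjx].
apply: f_incr fjx; apply: leq_trans le; exact: leq_bigmax_seq.
Qed.

Lemma compact_uniform_approx (A K : set X) (r : R) : compact A ->
  (forall x, A x -> exists2 k, K k & `|k - x| < r) ->
  \forall m \near \oo, forall x, A x -> exists2 k, K k & `|x - k| <= r - m.+1%:R^-1.
Proof.
move=> cA AK.
pose f m := \bigcup_(k in K) ball k (r - m.+1%:R^-1).
have : \forall m \near \oo, A `<=` f m.
  apply: compact_increasing_cover => //.
  - by move=> m; apply: bigcup_open => k _; apply: ball_open.
  - move=> m m' le x [k Kk]; rewrite -!ball_normE /ball_ /= => xk.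
    exists k; rewrite // -ball_normE /ball_ /=; apply: lt_le_trans xk _.
    by rewrite lerD2l lerN2 lef_pV2 ?posrE // ler_nat.
  - move=> x /AK [k Kk xk]; have [m hm] := ltr_add_invr xk.
    by exists m => //; exists k; rewrite // -ball_normE /ball_ /= ltrBrDr.
apply: filterS => m Af x /Af [k Kk]; rewrite -ball_normE /ball_ /= => xk.
by exists k; rewrite // distrC ltW.
Qed.

End UniformApproximation.

Lemma sume_lt_sumEFin [R : realDomainType] [I : finType] [e : I -> \bar R]
  [d : I -> R] [j] : (forall i, (e i <= (d i)%:E)%E) -> (e j < (d j)%:E)%E ->
  (\sum_(i : I) e i < (\sum_(i : I) d i)%:E)%E.
Proof.
move=> ed ej; rewrite (bigD1 j) //= [X in (_ < X%:E)%E](bigD1 j) //= EFinD.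
apply: (@le_lt_trans _ _ (e j + (\sum_(i | i != j) d i)%:E)%E).
  by apply: leeD2l; rewrite -sumEFin lee_sum.
by apply: lte_leD.
Qed.

Section Minimizers.
Context {R : realType} {X : normedModType R} {n : nat} {M : 'I_n.+1 -> set X}.
Hypotheses (M_compact : forall i, compact (M i)) (M_convex : forall i, cvx (M i)).

Lemma contract_SM_lt [K : set X] [d : 'I_n.+1 -> R] [delta : R] :
  K !=set0 -> closed K -> M ord0 !=set0 -> 0 < delta ->
  (forall i, (dH K (M i) <= (d i)%:E)%E) ->
  (forall i x, M i x -> exists2 k, K k & `|x - k| <= d i - delta) ->
  exists2 K', PfCl M K' & (SM M K' < (\sum_(i < n.+1) d i)%:E)%E.
Proof.
move=> [k0 Kk0] clK [x0 Mx0] delta0 Kd slack.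
have Kdpt i k : K k -> (dpt k (M i) <= (d i)%:E)%E.
  by move=> Kk; apply: le_trans (Kd i); apply: dpt_le_dHl.
have [q Kq x0q] := slack ord0 x0 Mx0.
have q_near : (dpt q (M ord0) <= (d ord0 - delta)%:E)%E.
  by apply: (le_trans (dpt_le_norm q Mx0)); rewrite lee_fin distrC.
have [B [_ MB]] := compact_bounded (M_compact ord0).
have K_bounded k : K k -> `|k| <= d ord0 + (B + 1).
  move=> Kk; apply: dpt_le_normD (Kdpt ord0 k Kk) _ => a Ma.
  by apply: MB; rewrite ?ltrDl.
pose D := 2 * (d ord0 + (B + 1)).
have KD k : K k -> `|k - q| <= D.
  move=> Kk; apply: le_trans (ler_normB _ _) _.
  by have := K_bounded k Kk; have := K_bounded q Kq; rewrite /D; lra.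
have D0 : 0 <= D by apply: le_trans (KD q Kq); rewrite subrr normr0.
pose t := delta / (D + delta + 1).
have t0 : 0 < t by rewrite divr_gt0 //; lra.
have t1 : t < 1 by rewrite ltr_pdivrMr; lra.
have tD : t * (D + delta) <= delta by rewrite /t mulrAC ler_pdivrMr; nra.
pose K' := contract q t K.
have K'_le i : (dH K' (M i) <= (d i)%:E)%E.
  have := dH_contract_le (M_convex i) (ltW t0) (ltW t1) KD (Kdpt i)
    (Kdpt i q Kq) (slack i).
  rewrite (_ : (1 - t) * d i + t * d i = d i); last by ring.
  by apply; nra.
have K'_lt0 : (dH K' (M ord0) < (d ord0)%:E)%E.
  have := dH_contract_le (M_convex ord0) (ltW t0) (ltW t1) KD (Kdpt ord0)
    q_near (slack ord0).
  rewrite (_ : (1 - t) * d ord0 + t * (d ord0 - delta) = d ord0 - t * delta);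
    last by ring.
  move=> /(_ ltac:(nra)) /le_lt_trans; apply.
  by rewrite lte_fin ltrBlDr ltrDl mulr_gt0.
exists K'; last exact: sume_lt_sumEFin K'_le K'_lt0.
split; first by exists ((1 - t) *: q + t *: q), q.
split; first by apply: contract_closed; rewrite // lt_eqF.
by apply: le_lt_trans (K'_le ord0) _; apply: ltry.
Qed.

Lemma Sigma_far_point (K : set X) (d : 'I_n.+1 -> R) :
  M ord0 !=set0 -> Sigma M K -> (forall i, dH K (M i) = (d i)%:E) ->
  exists i, exists2 x, M i x & Uball (d i) x `&` K = set0.
Proof.
move=> M0 [[K0 [clK _]] minK] dK; apply: contrapT => no_far.
have approx i x : M i x -> exists2 k, K k & `|k - x| < d i.
  move=> Mx; apply: contrapT => no_k; apply: no_far; exists i, x => //.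
  by apply/seteqP; split => // k [xk Kk]; apply: no_k; exists k.
have : \forall m \near \oo, forall i x, M i x ->
    exists2 k, K k & `|x - k| <= d i - m.+1%:R^-1.
  apply: filter_forall => i.
  exact: compact_uniform_approx (M_compact i) (approx i).
move=> /filter_ex [m slack].
have dK_le i : (dH K (M i) <= (d i)%:E)%E by rewrite dK.
have m0 : 0 < m.+1%:R^-1 :> R by rewrite invr_gt0.
have [K' PK' K'lt] := contract_SM_lt K0 clK M0 m0 dK_le slack.
have := minK K' PK'; rewrite /SM (eq_bigr _ (fun i _ => dK i)) sumEFin.
by move=> /(lt_le_trans K'lt); rewrite ltxx.
Qed.

Lemma Kd_Sigma_d (K : set X) (d : 'I_n.+1 -> R) :
  Sigma_d M (fun i => (d i)%:E) K -> Sigma_d M (fun i => (d i)%:E) (Kd M d).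
Proof.
move=> [[[K0 _] minK] dK'].
have dK i : dH K (M i) = (d i)%:E by have := congr1 (fun f => f i) dK'.
have KKd : K `<=` Kd M d.
  by move=> k Kk i _; rewrite /Bset /= -dK; apply: dpt_le_dHl.
have Kd_le i : (dH (Kd M d) (M i) <= (d i)%:E)%E.
  apply/dH_leP; split=> [p Kdp|x Mx]; first exact: Kdp.
  have := dpt_le_dHr K Mx; rewrite dK => /dpt_leP xK.
  by apply/dpt_leP => e /xK [k Kk xk]; exists k => //; apply: KKd.
have PKd : PfCl M (Kd M d).
  split; first by case: K0 => k Kk; exists k; apply: KKd.
  split; first by apply: closed_bigI => i _; apply: Bset_closed.
  by apply: le_lt_trans (Kd_le ord0) _; apply: ltry.
have SMK : SM M K = (\sum_(i < n.+1) d i)%:E.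
  by rewrite /SM (eq_bigr _ (fun i _ => dK i)) sumEFin.
have Kd_eq i : dH (Kd M d) (M i) = (d i)%:E.
  have := Kd_le i; rewrite le_eqVlt => /orP[/eqP //|lt].
  have := minK _ PKd; rewrite SMK => /(lt_le_trans (sume_lt_sumEFin Kd_le lt)).
  by rewrite ltxx.
split; last by apply: funext => i; rewrite /dvec Kd_eq.
split=> // Y PY; rewrite /SM (eq_bigr _ (fun i _ => Kd_eq i)) sumEFin -SMK.
exact: minK.
Qed.

End Minimizers.

Theorem mainTheorem19 (R : realType) (X : normedModType R) (n : nat)
  (M : 'I_n.+1 -> set X)
  (hne : forall i, M i !=set0) (hcpt : forall i, compact (M i))
  (hcvx : forall i, cvx (M i))
  (hSig : Sigma M !=set0)
  (d : 'I_n.+1 -> R) (hd : Omega M (fun i => (d i)%:E)) :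
  (forall K, Sigma_d M (fun i => (d i)%:E) K ->
     exists i, exists2 x, M i x & Uball (d i) x `&` K = set0) /\
  (exists i, exists2 x, M i x & Uball (d i) x `&` Kd M d = set0).
Proof.
have far K : Sigma_d M (fun i => (d i)%:E) K ->
    exists i, exists2 x, M i x & Uball (d i) x `&` K = set0.
  move=> [SK dK]; apply: Sigma_far_point => // i.
  by have := congr1 (fun f => f i) dK.
split=> //; have [K SK dK] := hd.
by apply: far; apply: (Kd_Sigma_d K).
Qed.
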